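(* Let $k$ be a field of characteristic not $2$ or $3$, let $n\ge2$, let $\mathcal{A}\in k^{n+1}\otimes\operatorname{Sym}_2k^3$, and let $X=Z(\det\mathcal{A}(\mathbf{x},\cdot,\cdot))\subseteq\mathbb{P}^n$ be the associated symmetroid hypersurface of degree $3$. If the Cayley variety of $\mathcal{A}$ is non-empty, then $X$ contains a linear subspace of $\mathbb{P}^n$ of dimension at least $n-2$, along which $X$ is singular.
   Context: $\mathcal{A}$ is viewed as an $(n+1)$-tuple $(A_0,\dots,A_n)$ of symmetric $3\times3$ matrices, $\mathcal{A}(\mathbf{x},\cdot,\cdot)=\sum x_iA_i$, and the Cayley variety is $Z(\mathbf{y}^TA_0\mathbf{y},\dots,\mathbf{y}^TA_n\mathbf{y})\subseteq\mathbb{P}^2$. *)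

From HB Require Import structures.
From mathcomp Require Import all_boot all_order all_algebra.
From mathcomp Require Import mpoly.
Set Implicit Arguments. Unset Strict Implicit. Unset Printing Implicit Defensive.
Import Order.TTheory GRing.Theory.
Local Open Scope ring_scope.

Definition symmat_of (k : fieldType) (n : nat) (A : 'I_n.+1 -> 'M[k]_3)
  : 'M[{mpoly k[n.+1]}]_3 :=
  \matrix_(a < 3, b < 3) \sum_(l < n.+1) (A l a b) *: 'X_l.

Definition symmetroid_poly (k : fieldType) (n : nat) (A : 'I_n.+1 -> 'M[k]_3)
  : {mpoly k[n.+1]} := \det (symmat_of A).

Definition ev_row (k : fieldType) (n : nat) (p : {mpoly k[n.+1]})
  (v : 'rV[k]_n.+1) : k := p.@[fun j => v 0 j].

Definition cayley_nonempty (k : fieldType) (n : nat) (A : 'I_n.+1 -> 'M[k]_3) :=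
  exists2 y : 'cV[k]_3, y != 0 & forall i, y^T *m A i *m y = 0.

(* The hypersurface Z(F) in P^n contains the projective linear subspace P(W)
   (W = row space of B) and is singular along it: F and all partials of F
   vanish at every point of W. *)
Definition singular_along (k : fieldType) (n : nat) (F : {mpoly k[n.+1]})
  (B : 'M[k]_n.+1) :=
  forall v : 'rV[k]_n.+1, (v <= B)%MS ->
    ev_row F v = 0 /\ forall j : 'I_n.+1, ev_row (mderiv j F) v = 0.

From mathcomp Require Import all_boot all_order all_algebra.
From mathcomp Require Import mpoly perm zify.
Set Implicit Arguments. Unset Strict Implicit. Unset Printing Implicit Defensive.
Import Order.TTheory GRing.Theory.
Local Open Scope ring_scope.

(* A point [y] of the Cayley variety is isotropic for every [A l], so the
   vectors [A l *m y] lie in the 2-dimensional space orthogonal to [y] and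
   [W = {x | A(x) *m y = 0}] has codimension at most 2.  In a basis whose
   [i]-th vector is [y], the [(i, i)] entry of [A(x)] vanishes identically,
   and for [x] in [W] the whole [i]-th row and column of [A(x)] vanish; this
   forces the determinant and all its partial derivatives to vanish on [W]. *)

Section SingularPoint.
Variables (k : fieldType) (m : nat) (e : 'I_m -> k).

Definition singular_at (p : {mpoly k[m]}) :=
  p.@[e] = 0 /\ forall j, (mderiv j p).@[e] = 0.

Lemma singular_at0 : singular_at 0.
Proof. by split=> [|j]; rewrite ?mderiv0 meval0. Qed.

Lemma singular_atD p q : singular_at p -> singular_at q -> singular_at (p + q).
Proof.
move=> [p0 dp0] [q0 dq0]; split=> [|j]; first by rewrite mevalD p0 q0 addr0.
by rewrite mderivD mevalD dp0 dq0 addr0.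
Qed.

Lemma singular_at_sum (I : finType) (F : I -> {mpoly k[m]}) :
  (forall i, singular_at (F i)) -> singular_at (\sum_i F i).
Proof.
move=> F_sing; apply: (big_ind singular_at) => //.
  exact: singular_at0.
exact: singular_atD.
Qed.

Lemma singular_atMl p q : singular_at p -> singular_at (q * p).
Proof.
move=> [p0 dp0]; split=> [|j]; first by rewrite mevalM p0 mulr0.
by rewrite mderivM mevalD !mevalM p0 dp0 !mulr0 addr0.
Qed.

Lemma singular_atMr p q : singular_at p -> singular_at (p * q).
Proof. by rewrite mulrC; apply: singular_atMl. Qed.

Lemma singular_at_mul_roots f g :
  f.@[e] = 0 -> g.@[e] = 0 -> singular_at (f * g).
Proof.
move=> f0 g0; split=> [|j]; first by rewrite mevalM f0 mul0r.
by rewrite mderivM mevalD !mevalM f0 g0 mulr0 mul0r addr0.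
Qed.

Lemma singular_atCM c p : c != 0 -> singular_at (c%:MP * p) -> singular_at p.
Proof.
move=> c_neq0 [cp0 dcp0]; have cancel_c x : c * x = 0 -> x = 0.
  by move/eqP; rewrite mulf_eq0 (negbTE c_neq0) => /eqP.
split=> [|j]; first by move: cp0; rewrite mevalM mevalC; exact: cancel_c.
by move: (dcp0 j); rewrite mderiv_mulC mevalM mevalC; exact: cancel_c.
Qed.

(* Every term of the Leibniz expansion either contains [N i i] or contains
   both an entry of row [i] and a different entry of column [i]. *)
Lemma singular_at_det d (N : 'M[{mpoly k[m]}]_d) (i : 'I_d) :
  N i i = 0 -> (forall b, (N i b).@[e] = 0) -> (forall a, (N a i).@[e] = 0) ->
  singular_at (\det N).
Proof.
move=> Nii0 row_i0 col_i0; apply: singular_at_sum => s; apply: singular_atMl.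
have [si_i | si_neq_i] := eqVneq (s i) i.
  by rewrite (bigD1 i) //= si_i Nii0 mul0r; exact: singular_at0.
have sVi_neq_i : (s^-1)%g i != i.
  by apply: contra si_neq_i => /eqP {1}<-; rewrite permKV.
rewrite (bigD1 i) //= (bigD1 ((s^-1)%g i)) //= mulrA permKV.
by apply/singular_atMr/singular_at_mul_roots.
Qed.

End SingularPoint.

Lemma symmat_ofE (k : fieldType) n (A : 'I_n.+1 -> 'M[k]_3) :
  symmat_of A = \sum_l 'X_l *: map_mx (@mpolyC n.+1 k) (A l).
Proof.
apply/matrixP => a b; rewrite !mxE summxE; apply: eq_bigr => l _.
by rewrite !mxE mulrC mul_mpolyC.
Qed.

Lemma meval_symmat_of (k : fieldType) n (A : 'I_n.+1 -> 'M[k]_3) e a b :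
  (symmat_of A a b).@[e] = (\sum_l e l *: A l) a b.
Proof.
rewrite mxE raddf_sum summxE; apply: eq_bigr => l _ /=.
by rewrite mevalZ mevalXU !mxE mulrC.
Qed.

Lemma det_symmat_of_conj (k : fieldType) n (A : 'I_n.+1 -> 'M[k]_3) Q :
  symmetroid_poly (fun l => Q^T *m A l *m Q) = (\det Q ^+ 2)%:MP * symmetroid_poly A.
Proof.
rewrite /symmetroid_poly; pose Qx := map_mx (@mpolyC n.+1 k) Q.
have -> : symmat_of (fun l => Q^T *m A l *m Q) = Qx^T *m symmat_of A *m Qx.
  rewrite !symmat_ofE mulmx_sumr mulmx_suml; apply: eq_bigr => l _.
  by rewrite -scalemxAr -scalemxAl !map_mxM map_trmx.
by rewrite !det_mulmx det_tr det_map_mx mulrAC -mpolyCM expr2.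
Qed.

Lemma conj_mx_entry (R : comPzRingType) d r (X : 'M[R]_d) (Q : 'M[R]_(d, r)) a b :
  (Q^T *m X *m Q) a b = ((col a Q)^T *m X *m col b Q) 0 0.
Proof.
by rewrite tr_col -row_mul !mxE; apply: eq_bigr => c _; rewrite !mxE.
Qed.

Lemma unitmx_with_col (k : fieldType) d (y : 'cV[k]_d) :
  y != 0 -> exists i (Q : 'M[k]_d), Q \in unitmx /\ col i Q = y.
Proof.
move=> y_neq0; have [i0 yi0] : exists i0, y i0 0 != 0.
  apply/existsP; apply: contraR y_neq0; rewrite negb_exists => /forallP y0.
  by apply/eqP/matrixP => a b; rewrite (ord1 b) mxE; apply/eqP/negPn/y0.
case: (@arg_minnP _ i0 (fun a => y a 0 != 0) val yi0) => i yi i_min.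
pose Q : 'M[k]_d := \matrix_(a, b) if b == i then y a 0 else (a == b)%:R.
exists i, Q; split; last by apply/matrixP => a b; rewrite (ord1 b) !mxE eqxx.
have Q_trig : is_trig_mx Q.
  apply/is_trig_mxP => a b a_lt_b; rewrite mxE; case: eqP => [b_i | _].
    by apply/eqP/negPn/negP => ya; move: (i_min a ya); rewrite -b_i leqNgt a_lt_b.
  by case: eqP a_lt_b => [->|]; rewrite ?ltnn.
rewrite unitmxE det_trig // (bigD1 i) //= big1 => [|a a_neq_i]; last first.
  by rewrite mxE (negbTE a_neq_i) eqxx.
by rewrite mxE eqxx mulr1 unitfE.
Qed.

Lemma mxrank_ltn_col (k : fieldType) p d (M : 'M[k]_(p, d)) (y : 'cV[k]_d) :
  y != 0 -> M *m y = 0 -> (\rank M < d)%N.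
Proof.
move=> y_neq0 My0; have : (y^T <= kermx M^T)%MS.
  by apply/sub_kermxP; rewrite -trmx_mul My0 trmx0.
move/mxrankS; rewrite rank_rV trmx_eq0 y_neq0 mxrank_ker mxrank_tr.
by rewrite subn_gt0.
Qed.

Lemma singular_at_symmetroid (k : fieldType) n (A : 'I_n.+1 -> 'M[k]_3)
    (y : 'cV[k]_3) (e : 'I_n.+1 -> k) :
  (forall l, (A l)^T = A l) -> y != 0 -> (forall l, y^T *m A l *m y = 0) ->
  (\sum_l e l *: A l) *m y = 0 -> singular_at e (symmetroid_poly A).
Proof.
move=> A_sym y_neq0 y_isotropic; set Ae := \sum_l _ => Ae_y0.
have Ae_sym : Ae^T = Ae.
  by rewrite linear_sum; apply: eq_bigr => l _; rewrite linearZ /= A_sym.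
have [i [Q [Q_unit Qi]]] := unitmx_with_col y_neq0.
have detQ2_neq0 : \det Q ^+ 2 != 0 by rewrite expf_neq0 // -unitfE -unitmxE.
have conj_Ae : \sum_l e l *: (Q^T *m A l *m Q) = Q^T *m Ae *m Q.
  rewrite mulmx_sumr mulmx_suml; apply: eq_bigr => l _.
  by rewrite scalemxAl scalemxAr.
apply: (singular_atCM detQ2_neq0); rewrite -det_symmat_of_conj.
apply: (singular_at_det (i := i)) => [|b|a]; rewrite ?meval_symmat_of ?conj_Ae.
- rewrite mxE big1 // => l _.
  by rewrite conj_mx_entry Qi y_isotropic mxE scale0r.
- by rewrite conj_mx_entry Qi -Ae_sym -trmx_mul Ae_y0 trmx0 mul0mx mxE.
- by rewrite conj_mx_entry Qi -mulmxA Ae_y0 mulmx0 mxE.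
Qed.

Theorem lemma4p0p8 (k : fieldType) (n : nat)
  (hchar2 : 2%N \notin [pchar k]) (hchar3 : 3%N \notin [pchar k])
  (hn : (2 <= n)%N)
  (A : 'I_n.+1 -> 'M[k]_3) (hsym : forall i, (A i)^T = A i) :
  cayley_nonempty A ->
  exists B : 'M[k]_n.+1,
    (n.-1 <= \rank B)%N /\ singular_along (symmetroid_poly A) B.
Proof.
move=> [y y_neq0 y_isotropic].
pose M := \matrix_(l < n.+1) (A l *m y)^T.
have My0 : M *m y = 0.
  by apply/row_matrixP => l; rewrite row_mul rowK trmx_mul hsym y_isotropic row0.
exists (kermx M); split.
  by have := mxrank_ltn_col y_neq0 My0; rewrite mxrank_ker; lia.
move=> v /sub_kermxP vM0; apply: (singular_at_symmetroid hsym y_neq0 y_isotropic).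
apply: trmx_inj; rewrite trmx0 -{}vM0 mulmx_sum_row mulmx_suml linear_sum.
by apply: eq_bigr => l _; rewrite rowK -scalemxAl linearZ.
Qed.
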